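(* The function $\Phi(\alpha,\beta)=\left(\frac{1+\sqrt{\alpha\beta}}{\sqrt{\alpha}+\sqrt{\beta}}\right)^2$ is nondecreasing in each variable on $[1,\infty)^2$. Consequently, if $A,B$ are $2\times2$ matrices with strictly positive entries, $\alpha,\beta\ge1$, $R(A)\le\alpha$ and $R(B)\le\beta$, then $R(AB)\le\Phi(\alpha,\beta)$.
   Context: For a $2\times2$ matrix $A=(a_{ij})$ with strictly positive entries, $F(A)=\frac{a_{11}a_{22}}{a_{12}a_{21}}$ and the distortion is $R(A)=\max\{F(A),1/F(A)\}$. *)

(* R is an arbitrary real closed field (contains the reals as a
   special case); 2x2 matrices are 'M[R]_2 with indices ord0 (=1st) and ord_max (=2nd). *)
From mathcomp Require Import all_boot all_order all_algebra.
Set Implicit Arguments. Unset Strict Implicit. Unset Printing Implicit Defensive.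
Import Order.TTheory GRing.Theory Num.Theory.
Local Open Scope ring_scope.

Section Defs.
Variable R : rcfType.

Definition posmx (A : 'M[R]_2) : Prop := forall i j, 0 < A i j.

Definition Fmx (A : 'M[R]_2) : R :=
  (A ord0 ord0 * A ord_max ord_max) / (A ord0 ord_max * A ord_max ord0).

Definition distortion (A : 'M[R]_2) : R := Num.max (Fmx A) (Fmx A)^-1.

Definition Phi (a b : R) : R :=
  ((1 + Num.sqrt (a * b)) / (Num.sqrt a + Num.sqrt b)) ^+ 2.
End Defs.

(* Put p = a11 a22, q = a12 a21, u = b11 b22, v = b12 b21.  Expanding AB,
   F(AB) = (m + n + p u + q v) / (m + n + p v + q u) with m n = p q u v.
   With x1 = sqrt p, x2 = sqrt q, y1 = sqrt u, y2 = sqrt v, S = sqrt alpha,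
   T = sqrt beta, the hypotheses R(A) <= alpha, R(B) <= beta mean that x1/x2
   lies in [1/S, S] and y1/y2 in [1/T, T], which gives the linear estimate
   (S + T)(x1 y1 + x2 y2) <= (1 + S T)(x1 y2 + x2 y1).  Squaring it and using
   AM-GM, 2 sqrt(m n) <= m + n, together with (S + T)^2 <= (1 + S T)^2 yields
   F(AB) <= Phi(alpha, beta).  Swapping the columns of B inverts F(AB) and
   preserves R(B), which gives the bound on 1/F(AB). *)
From mathcomp Require Import all_boot all_order all_algebra all_fingroup ring lra.
Import Order.TTheory GRing.Theory Num.Theory.
Local Open Scope ring_scope.

Section RealFieldInequalities.
Context {R : realFieldType}.

Lemma amgm_sqrt {m n w : R} :
  0 <= m -> 0 <= n -> 0 <= w -> m * n = w ^+ 2 -> 2 * w <= m + n.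
Proof.
move=> m0 n0 w0 mnE.
have sq_le : (2 * w) ^+ 2 <= (m + n) ^+ 2.
  have -> : (2 * w) ^+ 2 = 4 * (m * n) by rewrite mnE; ring.
  have : 0 <= (m - n) ^+ 2 by exact: sqr_ge0.
  lra.
by rewrite -(@ler_pXn2r _ 2) // nnegrE; lra.
Qed.

Lemma ratio_bounded_cross (S T x1 x2 y1 y2 : R) :
  x1 <= S * x2 -> x2 <= S * x1 -> y1 <= T * y2 -> y2 <= T * y1 ->
  (S + T) * (x1 * y1 + x2 * y2) <= (1 + S * T) * (x1 * y2 + x2 * y1).
Proof.
move=> hx1 hx2 hy1 hy2.
have -> : (1 + S * T) * (x1 * y2 + x2 * y1) = (S + T) * (x1 * y1 + x2 * y2)
   + ((S * x2 - x1) * (T * y1 - y2) + (S * x1 - x2) * (T * y2 - y1)) by ring.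
by rewrite lerDl; apply: addr_ge0; apply: mulr_ge0; rewrite subr_ge0.
Qed.

Lemma ratio_bounded_quadratic {S T x1 x2 y1 y2 m n : R} :
  1 <= S -> 1 <= T -> 0 < x1 -> 0 < x2 -> 0 < y1 -> 0 < y2 -> 0 <= m -> 0 <= n ->
  x1 <= S * x2 -> x2 <= S * x1 -> y1 <= T * y2 -> y2 <= T * y1 ->
  m * n = (x1 * x2 * y1 * y2) ^+ 2 ->
  (S + T) ^+ 2 * (m + n + x1 ^+ 2 * y1 ^+ 2 + x2 ^+ 2 * y2 ^+ 2) <=
  (1 + S * T) ^+ 2 * (m + n + x1 ^+ 2 * y2 ^+ 2 + x2 ^+ 2 * y1 ^+ 2).
Proof.
move=> S1 T1 x1p x2p y1p y2p m0 n0 hx1 hx2 hy1 hy2 mnE.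
have w0 : 0 <= x1 * x2 * y1 * y2 by apply/ltW; rewrite !mulr_gt0.
have mn_ge := amgm_sqrt m0 n0 w0 mnE.
have gap_ge0 : 0 <= (1 + S * T) ^+ 2 - (S + T) ^+ 2.
  have -> : (1 + S * T) ^+ 2 - (S + T) ^+ 2 = (S ^+ 2 - 1) * (T ^+ 2 - 1) by ring.
  by apply: mulr_ge0; rewrite subr_ge0 exprn_ege1.
have cross_sq : ((S + T) * (x1 * y1 + x2 * y2)) ^+ 2
                <= ((1 + S * T) * (x1 * y2 + x2 * y1)) ^+ 2.
  rewrite (@ler_pXn2r _ 2) ?nnegrE ?ratio_bounded_cross //;
    by apply: mulr_ge0; [nra | apply: addr_ge0; apply/ltW/mulr_gt0].
have := ler_wpM2l gap_ge0 mn_ge.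
lra.
Qed.

End RealFieldInequalities.

Section PhiMonotone.
Context {R : rcfType}.
Implicit Types a b x y z : R.

Lemma PhiC a b : Phi a b = Phi b a.
Proof. by rewrite /Phi (mulrC a b) (addrC (Num.sqrt a)). Qed.

Lemma PhiE a b : 0 <= a ->
  Phi a b = (1 + Num.sqrt a * Num.sqrt b) ^+ 2 / (Num.sqrt a + Num.sqrt b) ^+ 2.
Proof. by move=> a0; rewrite /Phi sqrtrM // expr_div_n. Qed.

Lemma sqrtr_ge1 {a} : 1 <= a -> 1 <= Num.sqrt a.
Proof. by move=> a1; rewrite -sqrtr1 ler_sqrt // (le_trans _ a1). Qed.

Lemma sqrtr_le_mul {x y z} : 0 <= y -> 0 <= z -> x <= z * y ->
  Num.sqrt x <= Num.sqrt z * Num.sqrt y.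
Proof. by move=> y0 z0 xzy; rewrite -sqrtrM // ler_sqrt // mulr_ge0. Qed.

Lemma Phi_homo_l a a' b : 1 <= a -> a <= a' -> 1 <= b -> Phi a b <= Phi a' b.
Proof.
move=> a1 aa' b1.
have a0 : 0 <= a by apply: le_trans a1.
have a'0 : 0 <= a' by apply: le_trans aa'.
have b0 : 0 <= b by apply: le_trans b1.
rewrite /Phi !sqrtrM //.
have s1 := sqrtr_ge1 a1; have t1 := sqrtr_ge1 b1.
have ss' : Num.sqrt a <= Num.sqrt a' by rewrite ler_sqrt.
move: s1 t1 ss'; set s := Num.sqrt a; set s' := Num.sqrt a'; set t := Num.sqrt b.
move=> s1 t1 ss'.
rewrite (@ler_pXn2r _ 2) // ?nnegrE; last first.
- by apply: divr_ge0; nra.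
- by apply: divr_ge0; nra.
rewrite ler_pdivrMr; last by lra.
rewrite mulrAC ler_pdivlMr; last by lra.
(* the cross-multiplied difference is (s' - s)(t^2 - 1) *)
have : 0 <= (s' - s) * (t * t - 1) by apply: mulr_ge0; nra.
lra.
Qed.

Lemma Phi_homo_r a b b' : 1 <= a -> 1 <= b -> b <= b' -> Phi a b <= Phi a b'.
Proof. by move=> a1 b1 bb'; rewrite PhiC (PhiC a b'); exact: Phi_homo_l. Qed.

End PhiMonotone.

Section TwoByTwo.
Context {R : rcfType}.
Implicit Types (A B M : 'M[R]_2) (a b : R).

Lemma mulmx2E A B i j :
  (A *m B) i j = A i ord0 * B ord0 j + A i ord_max * B ord_max j.
Proof.
rewrite mxE big_ord_recr big_ord1 /=.
by congr (_ * _ + _ * _); congr (_ _ _); apply/val_inj.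
Qed.

Definition swap_cols M : 'M[R]_2 := col_perm (tperm ord0 ord_max) M.

Lemma mulmx_swap_cols A B : A *m swap_cols B = swap_cols (A *m B).
Proof. by rewrite /swap_cols !col_permE mulmxA. Qed.

Lemma posmx_swap_cols M : posmx M -> posmx (swap_cols M).
Proof. by move=> Mpos i j; rewrite mxE. Qed.

Lemma Fmx_swap_cols M : Fmx (swap_cols M) = (Fmx M)^-1.
Proof. by rewrite /Fmx !mxE tpermL tpermR invf_div. Qed.

Lemma posmx_mul A B : posmx A -> posmx B -> posmx (A *m B).
Proof. by move=> Apos Bpos i j; rewrite mulmx2E addr_gt0 ?mulr_gt0. Qed.

Lemma distortion_leP M a : posmx M ->
  (distortion M <= a) =
  (M ord0 ord0 * M ord_max ord_max <= a * (M ord0 ord_max * M ord_max ord0))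
  && (M ord0 ord_max * M ord_max ord0 <= a * (M ord0 ord0 * M ord_max ord_max)).
Proof.
by move=> Mpos; rewrite /distortion ge_max /Fmx invf_div !ler_pdivrMr ?mulr_gt0.
Qed.

Lemma Fmx_mul_le_Phi A B a b : posmx A -> posmx B -> 1 <= a -> 1 <= b ->
  distortion A <= a -> distortion B <= b -> Fmx (A *m B) <= Phi a b.
Proof.
move=> Apos Bpos a1 b1; rewrite !distortion_leP // => /andP[hA1 hA2] /andP[hB1 hB2].
have a0 : 0 <= a by apply: le_trans a1.
have b0 : 0 <= b by apply: le_trans b1.
rewrite /Fmx ler_pdivrMr ?mulr_gt0 ?posmx_mul // !mulmx2E PhiE //.
move: hA1 hA2 hB1 hB2.
set a11 := A ord0 ord0; set a12 := A ord0 ord_max.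
set a21 := A ord_max ord0; set a22 := A ord_max ord_max.
set b11 := B ord0 ord0; set b12 := B ord0 ord_max.
set b21 := B ord_max ord0; set b22 := B ord_max ord_max.
move=> hA1 hA2 hB1 hB2.
have sqrt_gt0 (x : R) : 0 < x -> 0 < Num.sqrt x by rewrite sqrtr_gt0.
have sqrtK (x : R) : 0 < x -> Num.sqrt x ^+ 2 = x by move=> /ltW; exact: sqr_sqrtr.
have p0 : 0 < a11 * a22 by rewrite mulr_gt0 ?Apos.
have q0 : 0 < a12 * a21 by rewrite mulr_gt0 ?Apos.
have u0 : 0 < b11 * b22 by rewrite mulr_gt0 ?Bpos.
have v0 : 0 < b12 * b21 by rewrite mulr_gt0 ?Bpos.
have m0 : 0 <= a11 * a21 * b11 * b12 by apply/ltW; rewrite !mulr_gt0 ?Apos ?Bpos.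
have n0 : 0 <= a12 * a22 * b21 * b22 by apply/ltW; rewrite !mulr_gt0 ?Apos ?Bpos.
have mnE : (a11 * a21 * b11 * b12) * (a12 * a22 * b21 * b22) =
   (Num.sqrt (a11 * a22) * Num.sqrt (a12 * a21)
    * Num.sqrt (b11 * b22) * Num.sqrt (b12 * b21)) ^+ 2.
  by rewrite !exprMn !sqrtK //; ring.
have := ratio_bounded_quadratic (sqrtr_ge1 a1) (sqrtr_ge1 b1)
  (sqrt_gt0 _ p0) (sqrt_gt0 _ q0) (sqrt_gt0 _ u0) (sqrt_gt0 _ v0) m0 n0
  (sqrtr_le_mul (ltW q0) a0 hA1) (sqrtr_le_mul (ltW p0) a0 hA2)
  (sqrtr_le_mul (ltW v0) b0 hB1) (sqrtr_le_mul (ltW u0) b0 hB2) mnE.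
rewrite !sqrtK // => key; rewrite [X in _ <= X]mulrAC ler_pdivlMr; last first.
  by rewrite exprn_gt0 // ltr_wpDr ?sqrtr_ge0 // sqrt_gt0 // (lt_le_trans ltr01).
lra.
Qed.

End TwoByTwo.

Theorem mainTheorem2 (R : rcfType) :
  (forall a a' b : R, 1 <= a -> a <= a' -> 1 <= b -> Phi a b <= Phi a' b) /\
  (forall a b b' : R, 1 <= a -> 1 <= b -> b <= b' -> Phi a b <= Phi a b') /\
  (forall (A B : 'M[R]_2) (a b : R),
      posmx A -> posmx B -> 1 <= a -> 1 <= b ->
      distortion A <= a -> distortion B <= b ->
      distortion (A *m B) <= Phi a b).
Proof.
split; first exact: Phi_homo_l.
split; first exact: Phi_homo_r.
move=> A B a b Apos Bpos a1 b1 dA dB.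
have dBs : distortion (swap_cols B) <= b by rewrite /distortion Fmx_swap_cols invrK maxC.
rewrite /distortion ge_max Fmx_mul_le_Phi //=.
rewrite -Fmx_swap_cols -mulmx_swap_cols.
by apply: Fmx_mul_le_Phi => //; apply: posmx_swap_cols.
Qed.
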